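(* Assume $\lfloor (M_1+\dots+M_n)/p\rfloor=n-1$ (ample reduction), and let $c(z)=(c^l_j(z))_{l,j=1,\dots,n-1}$ be defined by $I^{[l]}(z)=\sum_{j=1}^{n-1}c^l_j(z)w_j$, where $w_j=M_j^{-1}e_j-M_{j+1}^{-1}e_{j+1}$. Then for any $i\ne j$ the polynomial $\det c(z)$ is divisible by $(z_i-z_j)^{M_i+M_j-p}$.
   Context: $p,q$ are primes, $n$ a positive integer with $p>n\ge2$, $p>q$; $m_1,\dots,m_n$ are positive integers $<q$; $M_i$ is the least positive integer with $M_i\equiv -m_iq^{-1}\pmod p$ (its residue in formulas over $\mathbb{F}_p$). $e_1,\dots,e_n$ is the standard basis of $\mathbb{F}_p^n$. With $\Phi_p(x,z)=\prod_i(x-z_i)^{M_i}$, $I^{[l]}(z)\in\mathbb{F}_p[z_1,\dots,z_n]^n$ is the coefficient of $x^{lp-1}$ in $(\Phi_p/(x-z_1),\dots,\Phi_p/(x-z_n))$; its coefficient vectors lie in $\{c:\sum_im_ic_i=0\}$, of which $w_1,\dots,w_{n-1}$ is a basis. (Under the hypothesis, $M_i+M_j-p>0$.) *)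

From HB Require Import structures.
From mathcomp Require Import all_boot all_order all_algebra.
From mathcomp Require Import mpoly.
Set Implicit Arguments. Unset Strict Implicit. Unset Printing Implicit Defensive.
Import GRing.Theory.
Local Open Scope ring_scope.

(* Variables z_1..z_n are 'X_k, k : 'I_n (0-based).  The auxiliary variable x is
   the variable 'X of {poly {mpoly 'F_p[n]}}. *)

(* Phi_p(x,z) / (x - z_i) = prod_k (x - z_k)^(M_k - [k = i]) (exact division, M_i >= 1) *)
Definition Phi_div (p n : nat) (M : 'I_n -> nat) (i : 'I_n)
  : {poly {mpoly 'F_p[n]}} :=
  \prod_(k < n) ('X - ('X_k)%:P) ^+ (if k == i then (M k).-1 else M k).

Definition Icoef (p n : nat) (M : 'I_n -> nat) (l : nat) (i : 'I_n)
  : {mpoly 'F_p[n]} :=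
  (Phi_div p M i)`_((l * p).-1).

(* w_j = M_j^{-1} e_j - M_{j+1}^{-1} e_{j+1}, for j = 1..n-1; here j : 'I_(n.-1)
   is 0-based, so w j has entry M_k^{-1} at k = j and -M_k^{-1} at k = j+1. *)
Definition wvec (p n : nat) (M : 'I_n -> nat) (j : 'I_n.-1) (k : 'I_n) : 'F_p :=
  if (k : nat) == (j : nat) then ((M k)%:R)^-1
  else if (k : nat) == (j : nat).+1 then - ((M k)%:R)^-1
  else 0.

From HB Require Import structures.
From mathcomp Require Import all_boot all_order all_algebra.
From mathcomp Require Import mpoly.
From mathcomp Require Import zify ring.
Import GRing.Theory.
Local Open Scope ring_scope.

(* Restricted to the first n-1 coordinates, the vectors w_j form a bidiagonal
   matrix with invertible diagonal entries 1/M_j, so det c is a unit multiple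
   of the determinant of the matrix (I^[l]_k)_{l,k<n-1}.  Adding z_i^(p(l-1))
   times row l to row 1 leaves that determinant unchanged and turns the entry
   of column k into Λ(Φ_p/(x-z_k)), where Λ(f) = Σ_l z_i^(p(l-1)) [x^(lp-1)] f.
   Writing x - z_j = (x - z_i) + (z_i - z_j), the polynomial Φ_p/(x-z_k) is
   (x-z_i)^p U + (z_i-z_j)^(M_i+M_j-p) V.  In characteristic p,
   (x-z_i)^p = x^p - z_i^p, and Λ((x^p - z_i^p) U) telescopes to a single
   coefficient of U lying beyond its degree, because ample reduction gives
   Σ_k M_k < np. *)

Lemma sum_dvd (R : comNzRingType) (I : Type) (r : seq I) (F : I -> R) (t : R) :
  (forall s, exists g, F s = t * g) -> exists g, \sum_(s <- r) F s = t * g.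
Proof.
move=> dvdF; elim/big_rec: _ => [|s x _ [g ->]]; first by exists 0; rewrite mulr0.
by have [h ->] := dvdF s; exists (h + g); rewrite mulrDr.
Qed.

Lemma det_dvd_of_row0_comb {R : comNzRingType} {N : nat} (A : 'M[R]_N.+1) (c t : R) :
  (forall s, exists g, \sum_(l < N.+1) c ^+ l * A l s = t * g) ->
  exists g, \det A = t * g.
Proof.
move=> dvd_comb.
pose E : 'M[R]_N.+1 := \matrix_(r, l) if r == ord0 then c ^+ l else (r == l)%:R.
have detE : \det E = 1.
  rewrite -det_tr det_trig; last first.
    apply/is_trig_mxP => a b lt_ab; rewrite !mxE.
    rewrite ifF; last by apply/eqP => b0; move: lt_ab; rewrite b0.
    by rewrite -val_eqE /= gtn_eqF.
  by apply: big1 => s _; rewrite !mxE eqxx; case: ifP => // /eqP ->; rewrite expr0.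
have -> : \det A = \det (E *m A) by rewrite det_mulmx detE mul1r.
rewrite (expand_det_row _ ord0).
apply: sum_dvd => s; have [g comb_g] := dvd_comb s.
exists (g * cofactor (E *m A) ord0 s); rewrite mulrA -comb_g !mxE.
by congr (_ * _); apply: eq_bigr => l _; rewrite mxE.
Qed.

Lemma expr_mul_exprD_split {R : comNzRingType} (Y T : R) {p e a b : nat} :
  (p + e <= a + b + 1)%N -> exists U V, Y ^+ a * (Y + T) ^+ b = Y ^+ p * U + T ^+ e * V.
Proof.
elim: b a e => [|b IH] a [|e] le_pe.
- by exists 0, (Y ^+ a); ring.
- exists (Y ^+ (a - p)), 0; rewrite mulr0 addr0 expr0 mulr1 -exprD.
  by congr (_ ^+ _); lia.
- by exists 0, (Y ^+ a * (Y + T) ^+ b.+1); ring.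
have [U1 [V1 E1]] := IH a.+1 e.+1 ltac:(lia).
have [U2 [V2 E2]] := IH a e ltac:(lia).
exists (U1 + T * U2), (V1 + V2).
have -> : Y ^+ a * (Y + T) ^+ b.+1 = Y ^+ a.+1 * (Y + T) ^+ b + T * (Y ^+ a * (Y + T) ^+ b).
  by rewrite !exprS; ring.
rewrite E1 E2 !exprS; ring.
Qed.

Lemma size_prod_XsubC_exp {R : comNzRingType} {n : nat} (z : 'I_n -> R) (d : 'I_n -> nat) :
  (size (\prod_(k < n) ('X - (z k)%:P) ^+ d k)%R <= (\sum_(k < n) d k).+1)%N.
Proof.
elim/big_rec2: _ => [|k s P _ IH]; first by rewrite size_poly1.
apply: leq_trans (size_polyMleq _ _) _; rewrite size_exp_XsubC; lia.
Qed.

Lemma XsubC_expp (R : comNzRingType) (p : nat) (a : R) : p \in [pchar R] ->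
  ('X - a%:P) ^+ p = 'X^p - (a ^+ p)%:P.
Proof.
move=> charRp; have charPp : p \in [pchar {poly R}] := rmorph_pchar polyC charRp.
rewrite -!(pFrobenius_autE charPp) pFrobenius_autB_comm; last exact: mulrC.
by rewrite !pFrobenius_autE rmorphXn.
Qed.

Section CoefComb.

Variables (R : comNzRingType) (p : nat).

Definition pcoef_comb (N : nat) (c : R) (f : {poly R}) : R :=
  \sum_(l < N) c ^+ l * f`_((l.+1 * p).-1).

Lemma pcoef_combD N c (f g : {poly R}) :
  pcoef_comb N c (f + g) = pcoef_comb N c f + pcoef_comb N c g.
Proof. by rewrite -big_split; apply: eq_bigr => l _; rewrite coefD mulrDr. Qed.

Lemma pcoef_combCM N c a (f : {poly R}) :
  pcoef_comb N c (a%:P * f) = a * pcoef_comb N c f.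
Proof. by rewrite mulr_sumr; apply: eq_bigr => l _; rewrite coefCM; ring. Qed.

Lemma pcoef_comb_widen N K c (f : {poly R}) : (size f <= (N.+1 * p).-1)%N ->
  pcoef_comb N c f = pcoef_comb (N + K) c f.
Proof.
move=> size_f; rewrite /pcoef_comb big_split_ord /= [X in _ = _ + X]big1 ?addr0 //.
move=> l _; rewrite nth_default ?mulr0 //; apply: leq_trans size_f _.
rewrite -!subn1 leq_sub2r // leq_mul2r; apply/orP; right; lia.
Qed.

(* Telescoping: the coefficient of 'X^((l+1)p-1) in ('X^p - c) * U is
   U_(lp-1) - c U_((l+1)p-1). *)
Lemma pcoef_comb_XnsubC (N : nat) c (U : {poly R}) : (0 < p)%N ->
  pcoef_comb N.+1 c (('X^p - c%:P) * U) = - (c ^+ N.+1 * U`_((N.+1 * p).-1)).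
Proof.
move=> p_gt0; elim: N => [|N IH].
  rewrite /pcoef_comb big_ord1 mulrBl coefB coefXnM coefCM ifT; last by rewrite /= mul1n; lia.
  by rewrite expr0 expr1 mul1r sub0r.
rewrite /pcoef_comb big_ord_recr /= -/(pcoef_comb N.+1 c _) IH.
rewrite mulrBl coefB coefXnM coefCM ifF; last by lia.
have -> : ((N.+2 * p).-1 - p = (N.+1 * p).-1)%N by rewrite mulSn; lia.
rewrite !exprS; ring.
Qed.

Lemma pcoef_comb_prod_XsubC_dvd (N n : nat) (z : 'I_n -> R) (d : 'I_n -> nat) (i j : 'I_n) e :
  p \in [pchar R] -> i != j -> (p + e <= d i + d j + 1)%N ->
  ((\sum_(k < n) d k).+2 <= N.+1 * p)%N ->
  exists g, pcoef_comb N (z i ^+ p) (\prod_(k < n) ('X - (z k)%:P) ^+ d k)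
            = (z i - z j) ^+ e * g.
Proof.
move=> charRp neq_ij le_pe size_bound.
have p_gt0 : (0 < p)%N := prime_gt0 (pcharf_prime charRp).
pose H := \prod_(k | (k != i) && (k != j)) ('X - (z k)%:P) ^+ d k.
have XsubC_j : 'X - (z j)%:P = ('X - (z i)%:P) + (z i - z j)%:P.
  by rewrite rmorphB /=; ring.
have [U [V split_ij]] := expr_mul_exprD_split ('X - (z i)%:P) (z i - z j)%:P le_pe.
have size_f : (size (\prod_(k < n) ('X - (z k)%:P) ^+ d k)%R <= (N.+1 * p).-1)%N.
  by apply: leq_trans (size_prod_XsubC_exp z d) _; lia.
rewrite (pcoef_comb_widen _ (size (U * H)).+1 _ _ size_f).
have -> : \prod_(k < n) ('X - (z k)%:P) ^+ d k
          = (('X - (z i)%:P) ^+ p * U + (z i - z j)%:P ^+ e * V) * H.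
  rewrite (bigD1 i) //= (bigD1 j) /=; last by rewrite eq_sym.
  by rewrite mulrA -split_ij XsubC_j.
rewrite mulrDl -!mulrA pcoef_combD.
rewrite XsubC_expp // -rmorphXn pcoef_combCM addnS pcoef_comb_XnsubC //.
rewrite [X in - (_ * X)]nth_default ?mulr0 ?oppr0 ?add0r; first by eexists.
rewrite -ltnS prednK ?muln_gt0 ?p_gt0 //.
by apply: leq_trans (leq_pmulr _ p_gt0); rewrite ltnS leq_addl.
Qed.

End CoefComb.
Arguments pcoef_comb {R}.

Lemma pcoef_comb_Phi_div_dvd (p n N : nat) (M : 'I_n -> nat) (i j k : 'I_n) :
  prime p -> i != j -> (forall r, (0 < M r)%N) -> (p < M i + M j)%N ->
  (\sum_(r < n) M r < N.+1 * p)%N ->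
  exists g, pcoef_comb p N ('X_i ^+ p) (Phi_div p M k)
            = ('X_i - 'X_j) ^+ (M i + M j - p) * g.
Proof.
move=> pr_p neq_ij M_gt0 lt_p_Mij ample.
pose d r := if r == k then (M r).-1 else M r.
have sum_d : ((\sum_(r < n) d r).+1 = \sum_(r < n) M r)%N.
  rewrite (bigD1 k) //= [in RHS](bigD1 k) //= {1}/d eqxx -addSn prednK //.
  by congr (_ + _)%N; apply: eq_bigr => r /negbTE; rewrite /d => ->.
apply: (@pcoef_comb_prod_XsubC_dvd _ p N n (fun r => 'X_r) d) => //.
- by apply: (rmorph_pchar (@mpolyC n _)); exact: pchar_Fp.
- have := M_gt0 i; have := M_gt0 j; rewrite /d.
  case: (i =P k) => [ik|_]; case: (j =P k) => [jk|_]; try lia.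
  by move: neq_ij; rewrite ik jk eqxx.
- lia.
Qed.

Lemma natr_Fp_neq0 (p x : nat) : prime p -> (0 < x < p)%N -> (x%:R : 'F_p) != 0.
Proof.
move=> pr_p /andP[x_gt0 lt_xp]; rewrite -(dvdn_pcharf (pchar_Fp pr_p)).
by apply/negP => /(dvdn_leq x_gt0); lia.
Qed.

Lemma det_wvec (p n : nat) (M : 'I_n.+1 -> nat) :
  \det (\matrix_(t < n, s < n) wvec p M t (widen_ord (leqnSn n) s))
  = \prod_(s < n) ((M (widen_ord (leqnSn n) s))%:R)^-1.
Proof.
rewrite -det_tr det_trig; last first.
  apply/is_trig_mxP => a b lt_ab; rewrite !mxE /wvec /=.
  by rewrite ifF; [rewrite ifF //|]; apply/eqP; lia.
by apply: eq_bigr => s _; rewrite !mxE /wvec /= eqxx.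
Qed.

Theorem lemma7p6 (p q n : nat) (m M : 'I_n -> nat)
  (c : 'I_n.-1 -> 'I_n.-1 -> {mpoly 'F_p[n]}) (i j : 'I_n) :
  prime p -> prime q -> (q < p)%N -> (2 <= n)%N -> (n < p)%N ->
  (forall k, (0 < m k)%N && (m k < q)%N) ->
  (* M_k = least positive integer with M_k = - m_k q^{-1} (mod p) *)
  (forall k, (0 < M k)%N /\
     ((M k)%:R = - ((m k)%:R) / (q%:R) :> 'F_p) /\
     (forall t : nat, (0 < t)%N -> (t%:R = - ((m k)%:R) / (q%:R) :> 'F_p) ->
        (M k <= t)%N)) ->
  (* ample reduction *)
  ((\sum_(k < n) M k) %/ p)%N = n.-1 ->
  (* c(z) is defined by I^{[l]}(z) = sum_j c^l_j(z) w_j, l = 1..n-1 *)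
  (forall (l : 'I_n.-1) (k : 'I_n),
     Icoef p M (l.+1) k = \sum_(t < n.-1) c l t * (wvec p M t k)%:MP) ->
  i != j ->
  exists g : {mpoly 'F_p[n]},
    \det (\matrix_(l, t) c l t) = ('X_i - 'X_j) ^+ (M i + M j - p) * g.
Proof.
case: n m M c i j => [|[|n]] m M c i j; [by [] | by [] |].
move=> pr_p pr_q lt_qp _ _ hm hM ample hc neq_ij.
set C := \matrix_(l, t) c l t.
have [|lt_p_Mij] := leqP (M i + M j) p.
  by rewrite -subn_eq0 => /eqP->; exists (\det C); rewrite mul1r.
have M_gt0 k : (0 < M k)%N by have [] := hM k.
have M_neq0 k : ((M k)%:R : 'F_p) != 0.
  have [_ [-> _]] := hM k; have /andP[m_gt0 lt_mq] := hm k.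
  have m_range : (0 < m k < p)%N by rewrite m_gt0 (ltn_trans lt_mq).
  have q_range : (0 < q < p)%N by rewrite prime_gt0.
  by rewrite mulf_eq0 invr_eq0 oppr_eq0 negb_or !natr_Fp_neq0.
pose w := \prod_(s < n.+1) ((M (widen_ord (leqnSn _) s))%:R : 'F_p)^-1.
have w_neq0 : w != 0 by rewrite prodf_seq_neq0; apply/allP => s _; rewrite invr_eq0 M_neq0.
pose A : 'M[{mpoly 'F_p[n.+2]}]_n.+1 := \matrix_(l, s) Icoef p M l.+1 (widen_ord (leqnSn _) s).
have detA : \det A = \det C * w%:MP.
  rewrite /w -det_wvec -det_map_mx -det_mulmx; congr (\det _).
  by apply/matrixP => l s; rewrite !mxE hc; apply: eq_bigr => t _; rewrite !mxE.
have [g dvd_detA] : exists g, \det A = ('X_i - 'X_j) ^+ (M i + M j - p) * g.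
  apply: (det_dvd_of_row0_comb _ ('X_i ^+ p)) => s.
  under eq_bigr do rewrite mxE.
  apply: pcoef_comb_Phi_div_dvd => //.
  by rewrite -ltn_divLR ?prime_gt0 // ample.
exists (g * (w^-1)%:MP).
by rewrite mulrA -dvd_detA detA -mulrA -rmorphM divff // rmorph1 mulr1.
Qed.
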